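(* Let $p\ge 3$ be an integer and let $n\ge p+2$ be an integer. Then $\mathrm{conv}^{\leq p}(DW_n)\ge \frac{p-1}{(p-2)^2+1}\cdot(n-2)$.
   Context: For $n\ge 5$, the double wheel $DW_n$ is the graph obtained from a cycle on $n-2$ vertices by adding two new vertices, each adjacent to all vertices of the cycle (the two new vertices are not adjacent to each other). For an oriented graph $D$ and $X\subseteq V(D)$, the inversion of $X$ reverses every arc with both endvertices in $X$; a $(\leq p)$-inversion is the inversion of a set of at most $p$ vertices. $\mathrm{conv}^{\leq p}(G)$ is the minimum number of $(\leq p)$-inversions transforming an orientation of $G$ into its converse (all arcs reversed); it does not depend on the orientation. *)

From mathcomp Require Import all_boot all_order all_algebra.
Set Implicit Arguments. Unset Strict Implicit. Unset Printing Implicit Defensive.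

(* Double wheel DW_n on vertex set 'I_n: vertices 0..n-3 form the cycle
   C_{n-2} (i ~ i+1 mod n-2), vertices n-2 and n-1 are the two hubs,
   adjacent to every cycle vertex and not to each other. *)
Definition dw_edge (n : nat) : rel 'I_n := fun x y =>
  let m := (n - 2)%N in
  [|| [&& (x < m)%N, (y < m)%N &
         (y == (x.+1 %% m)%N :> nat) || (x == (y.+1 %% m)%N :> nat)],
      ((x < m)%N && (m <= y)%N) | ((y < m)%N && (m <= x)%N)].

Definition is_orientation (T : finType) (E : rel T) (D : rel T) : Prop :=
  forall x y, E x y = (D x y || D y x) /\ ~~ (D x y && D y x).

Definition invert (T : finType) (X : {set T}) (D : rel T) : rel T :=
  fun x y => if (x \in X) && (y \in X) then D y x else D x y.

Definition invert_seq (T : finType) (s : seq {set T}) (D : rel T) : rel T :=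
  foldl (fun D' X => invert X D') D s.

Definition converse_seq (T : finType) (p : nat) (D : rel T) (s : seq {set T}) : Prop :=
  all (fun X : {set T} => #|X| <= p)%N s /\
  forall x y, invert_seq s D x y = D y x.

(* Every edge of DW_n lies inside some inverted set, since otherwise its arc is
   never reversed.  Give a set with t rim vertices, c rim edges and hub
   indicators e1, e2 the weight (e1 + e2) t + (p - 3) c.  Covering the 2(n-2)
   spokes and the n-2 rim edges forces total weight at least (p-1)(n-2), while
   |X| <= p caps each weight at (p-2)^2 + 1, because a set missing part of the
   rim spans at most t - 1 rim edges.  A set containing the whole rim is
   possible only when n - 2 = p; then for p > 5 the spokes of one hub already
   need two sets. *)

From mathcomp Require Import all_boot all_order all_algebra zify.
Import GRing.Theory Num.Theory.
Set Implicit Arguments. Unset Strict Implicit. Unset Printing Implicit Defensive.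

Lemma invert_seq_outside (T : finType) (s : seq {set T}) (D : rel T) x y :
  (forall X, X \in s -> ~~ ((x \in X) && (y \in X))) -> invert_seq s D x y = D x y.
Proof.
elim: s D => [|X s IHs] D outside //=.
rewrite IHs => [|Y sY]; last by apply: outside; rewrite in_cons sY orbT.
by rewrite /invert (negbTE (outside X (mem_head _ _))).
Qed.

Lemma converse_seq_cover (T : finType) (E : rel T) (p : nat) (D : rel T)
    (s : seq {set T}) :
  is_orientation E D -> converse_seq p D s ->
  forall x y, E x y -> exists2 X, X \in s & (x \in X) && (y \in X).
Proof.
move=> orientD [_ converseD] x y Exy.
have [/hasP //|/hasPn outside] := boolP (has (fun X : {set T} => (x \in X) && (y \in X)) s).
have := converseD x y; rewrite invert_seq_outside // => Dxy.
by have [edge_xy asym_xy] := orientD x y; move: Exy asym_xy; rewrite edge_xy Dxy; case: (D y x).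
Qed.

Lemma card_le_sum_cover (T : finType) (I : eqType) (s : seq I) (P : pred I)
    (A : I -> {set T}) (V : {set T}) :
  (forall v, v \in V -> exists2 i, (i \in s) && P i & v \in A i) ->
  #|V| <= \sum_(i <- s | P i) #|A i|.
Proof.
move=> coverV; rewrite -sum1_card.
apply: (@leq_trans (\sum_(v in V) \sum_(i <- s | P i) (v \in A i))).
  apply: leq_sum => v /coverV [i /andP[si Pi] vAi].
  by rewrite (big_rem i si) /= Pi vAi.
rewrite exchange_big; apply: leq_sum => i _.
by rewrite -sum1_card big_mkcond [X in _ <= X]big_mkcond; apply: leq_sum => v _; case: (_ \in _).
Qed.

Lemma sum_le_size (T : eqType) (s : seq T) (P : pred T) (f : T -> nat) d :
  (forall X, X \in s -> P X -> f X <= d) -> \sum_(X <- s | P X) f X <= d * size s.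
Proof.
move=> fd; rewrite big_seq_cond big_mkcond /=.
apply: (@leq_trans (\sum_(X <- s) d)); last by rewrite big_const_seq count_predT iter_addn_0.
by apply: leq_sum => X _; case: ifP => // /andP[sX PX]; apply: fd.
Qed.

Section Rim.

Variable n : nat.
Local Notation m := (n - 2).

Definition rim : {set 'I_n} := [set v : 'I_n | v < m].

Definition rim_next (v : 'I_n) : 'I_n := insubd v (v.+1 %% m).

(* [v] stands for the rim edge [v -- rim_next v]. *)
Definition rim_arcs (X : {set 'I_n}) : {set 'I_n} := [set v in X :&: rim | rim_next v \in X].

Lemma card_rim : #|rim| = m.
Proof.
have widen_inj : injective (widen_ord (leq_subr 2 n)) by move=> u w /(congr1 val) /= /val_inj.
rewrite -[RHS]card_ord -(card_imset _ widen_inj).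
apply: eq_card => v; rewrite /rim inE; apply/idP/imsetP => [vm|[u _ ->]]; last by case: u.
by exists (Ordinal vm) => //; apply: val_inj.
Qed.

Lemma val_rim_next (v : 'I_n) : v < m -> val (rim_next v) = v.+1 %% m.
Proof.
move=> vm; rewrite val_insubd ifT //.
by rewrite (leq_trans (ltn_pmod _ (leq_ltn_trans (leq0n v) vm))) ?leq_subr.
Qed.

Lemma rim_arcs_sub X : rim_arcs X \subset X :&: rim.
Proof. by apply/subsetP => v; rewrite inE => /andP[]. Qed.

Lemma rim_next_closed_sub X (j : 'I_n) :
  j \in X :&: rim -> (forall v, v \in X :&: rim -> rim_next v \in X) -> rim \subset X.
Proof.
move=> Xj Xclosed; have jm : val j < m by move: Xj; rewrite !inE => /andP[].
have orbit k : [exists u in X :&: rim, val u == (j + k) %% m].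
  elim: k => [|k /exists_inP[u Xu /eqP uk]].
    by apply/exists_inP; exists j; rewrite // addn0 modn_small.
  have um : val u < m by move: Xu; rewrite !inE => /andP[].
  apply/exists_inP; exists (rim_next u).
    by rewrite !inE Xclosed //= val_rim_next // ltn_pmod // (leq_ltn_trans _ um).
  by rewrite val_rim_next // uk -addn1 modnDml addn1 addnS.
apply/subsetP => u; rewrite inE => um.
have /exists_inP[w Xw /eqP wu] := orbit (u + m - j).
rewrite addnBA ?(leq_trans (ltnW jm) (leq_addl _ _)) // addnC addnK modnDr modn_small // in wu.
by rewrite (_ : u = w); [move: Xw; rewrite inE => /andP[] | apply: val_inj].
Qed.

Lemma card_rim_arcs_le X : #|X :&: rim| < m -> #|rim_arcs X| <= #|X :&: rim|.-1.
Proof.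
move=> Xm; have [X0|/card_gt0P[j Xj]] := posnP #|X :&: rim|.
  by have := subset_leq_card (rim_arcs_sub X); rewrite X0.
rewrite -ltnS prednK; last by apply/card_gt0P; exists j.
rewrite proper_card // properEneq rim_arcs_sub andbT.
apply: contraTneq Xm => arcsX; rewrite -leqNgt -card_rim subset_leq_card //.
rewrite subsetI subxx andbT (rim_next_closed_sub Xj) // => v.
by rewrite -arcsX inE => /andP[].
Qed.

End Rim.

Lemma hub_weight_le (p t c : nat) (ea eb : bool) :
  t + ea + eb <= p -> c <= t.-1 -> ea * t + eb * t + (p - 3) * c <= (p - 2) ^ 2 + 1.
Proof. by case: ea; case: eb => /= tp ct; nia. Qed.

Lemma full_rim_weight_le (p c : nat) : p <= 5 -> c <= p -> (p - 3) * c <= (p - 2) ^ 2 + 1.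
Proof. by move=> p5 cp; nia. Qed.

Lemma two_sets_suffice (p : nat) : 5 <= p -> (p - 1) * p <= ((p - 2) ^ 2 + 1) * 2.
Proof. by move=> p5; nia. Qed.

Section DoubleWheel.

Variable n : nat.
Local Notation m := (n - 2).

Lemma dw_edge_hub (v h : 'I_n) : v < m -> m <= h -> dw_edge v h.
Proof. by move=> vm mh; rewrite /dw_edge vm mh !orbT. Qed.

Lemma dw_edge_rim_next (v : 'I_n) : v < m -> dw_edge v (rim_next v).
Proof.
move=> vm; have m_pos : 0 < m by apply: leq_ltn_trans vm.
by rewrite /dw_edge vm val_rim_next // ltn_pmod // eqxx.
Qed.

Lemma card_rim_hubs X (h1 h2 : 'I_n) : m <= h1 -> m <= h2 -> h1 != h2 ->
  #|X :&: rim n| + (h1 \in X) + (h2 \in X) <= #|X|.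
Proof.
move=> mh1 mh2 h12; rewrite (cardsD1 h1 X) (cardsD1 h2 (X :\ h1)) !inE eq_sym h12 /=.
suff sub : #|X :&: rim n| <= #|X :\ h1 :\ h2|.
  by move: (h1 \in X) (h2 \in X) #|X :&: rim n| #|X :\ h1 :\ h2| sub => [] [] a b /=; lia.
apply/subset_leq_card/subsetP => v; rewrite !inE => /andP[Xv vm]; rewrite Xv !andbT.
by apply/andP; split; apply: contraTneq vm => ->; rewrite -leqNgt.
Qed.

Variables (p : nat) (D : rel 'I_n) (s : seq {set 'I_n}).
Hypotheses (hn : p + 2 <= n) (orientD : is_orientation (@dw_edge n) D)
  (convs : converse_seq p D s).

Lemma card_converse_set X : X \in s -> #|X| <= p.
Proof. exact: (allP convs.1). Qed.

Lemma hub_cover (h : 'I_n) : m <= h -> m <= \sum_(X <- s | h \in X) #|X :&: rim n|.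
Proof.
move=> mh; rewrite -card_rim; apply: card_le_sum_cover => v; rewrite inE => vm.
have [X sX /andP[Xv Xh]] := converse_seq_cover orientD convs (dw_edge_hub vm mh).
by exists X; rewrite ?sX ?Xh // !inE Xv.
Qed.

Lemma rim_arcs_cover : m <= \sum_(X <- s) #|rim_arcs X|.
Proof.
rewrite -card_rim; apply: card_le_sum_cover => v; rewrite inE => vm.
have [X sX /andP[Xv Xnext]] := converse_seq_cover orientD convs (dw_edge_rim_next vm).
by exists X; rewrite ?sX // !inE Xv vm Xnext.
Qed.

Variables h1 h2 : 'I_n.
Hypotheses (mh1 : m <= h1) (mh2 : m <= h2) (h12 : h1 != h2).

Lemma converse_set_weight_le X : X \in s -> (p < m) || (p <= 5) ->
  (h1 \in X) * #|X :&: rim n| + (h2 \in X) * #|X :&: rim n| + (p - 3) * #|rim_arcs X|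
    <= (p - 2) ^ 2 + 1.
Proof.
move=> sX small_p.
have Xp := leq_trans (card_rim_hubs X mh1 mh2 h12) (card_converse_set sX).
have := subset_leq_card (subsetIr X (rim n)); rewrite card_rim leq_eqVlt.
case/orP=> [/eqP full_rim | partial_rim]; last exact: hub_weight_le Xp (card_rim_arcs_le partial_rim).
have pm : p = m by move: Xp; rewrite full_rim; lia.
have [-> ->] : h1 \in X = false /\ h2 \in X = false.
  by move: Xp; rewrite full_rim pm; case: (h1 \in X); case: (h2 \in X); split; lia.
rewrite !mul0n !add0n full_rim_weight_le //; first by move: small_p; rewrite pm ltnn.
by rewrite pm -full_rim subset_leq_card ?rim_arcs_sub.
Qed.

Lemma dw_size_ge_weighted : (p < m) || (p <= 5) ->
  (p - 1) * m <= ((p - 2) ^ 2 + 1) * size s.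
Proof.
move=> small_p.
have weights := sum_le_size (P := predT) (fun X sX _ => converse_set_weight_le sX small_p).
have hub_sum h : \sum_(X <- s) (h \in X) * #|X :&: rim n| =
    \sum_(X <- s | h \in X) #|X :&: rim n|.
  by rewrite [RHS]big_mkcond; apply: eq_bigr => X _; case: (h \in X); rewrite ?mul1n.
rewrite !big_split !hub_sum -big_distrr /= in weights.
have cover1 := hub_cover mh1; have cover2 := hub_cover mh2.
have cover_arcs := leq_mul (leqnn (p - 3)) rim_arcs_cover.
apply: leq_trans weights.
move: (\sum_(X <- s | h1 \in X) _) (\sum_(X <- s | h2 \in X) _) (\sum_(X <- s) _)
  cover1 cover2 cover_arcs; nia.
Qed.

Lemma dw_size_ge2_tight : 0 < p -> p = m -> 2 <= size s.
Proof.
move=> p_pos pm.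
have hub_sets : \sum_(X <- s | h1 \in X) #|X :&: rim n| <= (p - 1) * size s.
  apply: sum_le_size => X sX h1X.
  have := leq_trans (card_rim_hubs X mh1 mh2 h12) (card_converse_set sX).
  by rewrite h1X; lia.
have := leq_trans (hub_cover mh1) hub_sets; rewrite -pm.
by case: (size s) => [|[|k]] //; lia.
Qed.

Lemma dw_converse_size_ge : (p - 1) * m <= ((p - 2) ^ 2 + 1) * size s.
Proof.
have [small_p | ] := boolP ((p < m) || (p <= 5)); first exact: dw_size_ge_weighted.
rewrite negb_or -leqNgt -ltnNge => /andP[mp p5].
have pm : p = m by apply/eqP; rewrite eqn_leq mp andbT; lia.
rewrite -pm (leq_trans (two_sets_suffice (ltnW p5))) // leq_mul2l.
by rewrite dw_size_ge2_tight ?orbT // (leq_trans _ p5).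
Qed.

End DoubleWheel.

Lemma double_wheel_hubs (n : nat) : 2 <= n ->
  exists h1 h2 : 'I_n, [/\ n - 2 <= h1, n - 2 <= h2 & h1 != h2].
Proof.
case: n => [|[|m]] // _; rewrite subSS subn1 /=.
by exists (inord m), (inord m.+1); rewrite !inordK // -val_eqE /= !inordK // neq_ltn ltnSn.
Qed.

Local Open Scope ring_scope.

Theorem mainTheorem19 (p n : nat) (hp : (3 <= p)%N) (hn : (p + 2 <= n)%N)
  (D : rel 'I_n) (hD : is_orientation (@dw_edge n) D)
  (s : seq {set 'I_n}) (hs : converse_seq p D s) :
  ((p - 1)%:R / (((p - 2) ^ 2 + 1)%N)%:R) * (n - 2)%:R <= (size s)%:R :> rat.
Proof.
have [h1 [h2 [mh1 mh2 h12]]] := double_wheel_hubs (leq_trans (leq_addl p 2) hn).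
rewrite mulrAC ler_pdivrMr; last by rewrite ltr0n addn1.
rewrite -!natrM ler_nat [X in (_ <= X)%N]mulnC.
exact/(dw_converse_size_ge hn hD hs mh1 mh2 h12).
Qed.
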